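(* Let $\mu>0$ and suppose Assumptions A and B below hold. For any given $(\bar{\mathbf{x}},\bar y)\in\mathrm{dom}\,g\times\mathrm{dom}\,h$ and $\eta_y>0$, with $\bar y^+=\mathrm{prox}_{\eta_yh}(\bar y+\eta_ys_y(\bar{\mathbf{x}},\bar y;\boldsymbol\zeta))$, $$2\eta_y\langle\tilde G_y(\bar{\mathbf{x}},\bar y;\boldsymbol\zeta),\bar y-y_*(\bar{\mathbf{x}})\rangle+\eta_y^2\|\tilde G_y(\bar{\mathbf{x}},\bar y;\boldsymbol\zeta)\|^2\le-\eta_y\mu\|\bar y-y_*(\bar{\mathbf{x}})\|^2-\eta_y^2(1-L\eta_y)\|\tilde G_y(\bar{\mathbf{x}},\bar y;\boldsymbol\zeta)\|^2+2\eta_y\langle s_y(\bar{\mathbf{x}},\bar y;\boldsymbol\zeta)-\nabla_yf(\bar{\mathbf{x}},\bar y),\bar y^+-y_*(\bar{\mathbf{x}})\rangle.$$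
   Context: Setting. $\mathcal{X}_i=\mathbb{R}^{n_i}$, $\mathcal{X}=\prod_{i=1}^N\mathcal{X}_i$, $\mathcal{Y}$ finite-dimensional Euclidean; $g(\mathbf{x})=\sum_ig_i(x_i)$; $\mathrm{prox}_\phi(u)=\arg\min_v\phi(v)+\frac12\|v-u\|^2$. Assumption A: $g_i$, $h$ closed convex; $f$ differentiable on an open set containing $\mathrm{dom}\,g\times\mathrm{dom}\,h$, $\nabla f$ $L$-Lipschitz there, $f(\mathbf{x},\cdot)$ $\mu$-strongly concave for each $\mathbf{x}\in\mathrm{dom}\,g$. $y_*(\mathbf{x})=\arg\max_yf(\mathbf{x},y)-h(y)$. Assumption B: unbiased stochastic oracle $\tilde\nabla_yf(\mathbf{x},y;\zeta)$ for $\nabla_yf$ with variance at most $\sigma_y^2$ at every point of $\mathrm{dom}\,g\times\mathrm{dom}\,h$. $\boldsymbol\zeta=[\zeta_j]_{j=1}^{M_y}$ i.i.d. samples, $s_y(\mathbf{x},y;\boldsymbol\zeta)=\frac1{M_y}\sum_j\tilde\nabla_yf(\mathbf{x},y;\zeta_j)$, $\tilde G_y(\mathbf{x},y;\boldsymbol\zeta)=[\mathrm{prox}_{\eta_yh}(y+\eta_ys_y)-y]/\eta_y$. *)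

From HB Require Import structures.
From mathcomp Require Import all_boot all_order all_algebra.
From mathcomp Require Import all_classical all_reals all_analysis.
Set Implicit Arguments. Unset Strict Implicit. Unset Printing Implicit Defensive.
Import Order.TTheory GRing.Theory Num.Theory.
Import numFieldNormedType.Exports.
Local Open Scope classical_set_scope.
Local Open Scope ring_scope.

Section Euclid.
Variable R : realType.

Definition dotv (m : nat) (u v : 'rV[R]_m) : R := \sum_(i < m) u 0 i * v 0 i.
Definition sqn (m : nat) (u : 'rV[R]_m) : R := dotv u u.
Definition enorm (m : nat) (u : 'rV[R]_m) : R := Num.sqrt (sqn u).

Definition pnorm (n m : nat) (u : 'rV[R]_n) (v : 'rV[R]_m) : R :=
  Num.sqrt (sqn u + sqn v).

Definition edom (T : Type) (phi : T -> \bar R) : set T :=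
  [set x | (phi x < +oo)%E].

Definition proper_fun (T : Type) (phi : T -> \bar R) : Prop :=
  (forall x, phi x != -oo%E) /\ exists x, (phi x < +oo)%E.

Definition convex_fun (m : nat) (phi : 'rV[R]_m -> \bar R) : Prop :=
  forall (u v : 'rV[R]_m) (a : R), 0 <= a <= 1 ->
    (phi (a *: u + (1 - a) *: v)%R <= a%:E * phi u + (1 - a)%:E * phi v)%E.

Definition closed_fun (m : nat) (phi : 'rV[R]_m -> \bar R) : Prop :=
  forall t : R, closed [set u | (phi u <= t%:E)%E].

Definition closed_proper_convex (m : nat) (phi : 'rV[R]_m -> \bar R) : Prop :=
  [/\ closed_fun phi, proper_fun phi & convex_fun phi].

Definition strongly_concave (m : nat) (mu : R) (psi : 'rV[R]_m -> R) : Prop :=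
  forall (u v : 'rV[R]_m) (a : R), 0 <= a <= 1 ->
    a * psi u + (1 - a) * psi v + mu / 2 * a * (1 - a) * sqn (u - v)
      <= psi (a *: u + (1 - a) *: v).

Definition is_prox (m : nat) (phi : 'rV[R]_m -> \bar R) (u v : 'rV[R]_m) : Prop :=
  forall w, (phi v + (sqn (v - u)%R / 2)%:E <= phi w + (sqn (w - u)%R / 2)%:E)%E.

(* separable function g(x) = sum_i g_i(x_i), x = [x_1 .. x_N], x_i in R^{n_i} *)
Definition sepsum (N : nat) (n : 'I_N -> nat)
  (gi : forall i : 'I_N, 'rV[R]_(n i) -> \bar R)
  (x : 'rV[R]_(\sum_(i < N) n i)) : \bar R :=
  (\sum_(i < N) gi i (submxrow x i))%E.

End Euclid.

(** Along segments, f(xbar, .) is a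
    one-variable function with an L-Lipschitz derivative, so the mean value
    theorem gives the smoothness bound f(yplus) >= f(ybar) + <grad, yplus - ybar>
    - L/2 |yplus - ybar|^2, and letting the weight tend to 0 in the definition
    of strong concavity gives f(ystar) <= f(ybar) + <grad, ystar - ybar>
    - mu/2 |ystar - ybar|^2. Optimality of ystar compares f - h at yplus and
    ystar, and comparing the prox point with the points of the segment towards
    ystar gives eta (h(yplus) - h(ystar)) <= <yplus - ybar - eta s, ystar - yplus>.
    Multiplying the first three inequalities by eta and adding the fourth is the
    claim. The argument is pathwise: s can be any vector. *)

From HB Require Import structures.
From mathcomp Require Import all_boot all_order all_algebra.
From mathcomp Require Import all_classical all_reals all_analysis.
From mathcomp Require Import ring lra.
Import Order.TTheory GRing.Theory Num.Theory.
Import numFieldNormedType.Exports.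
Local Open Scope classical_set_scope.
Local Open Scope ring_scope.

Set Implicit Arguments. Unset Strict Implicit. Unset Printing Implicit Defensive.

Section InnerProduct.
Variables (R : realType) (m : nat).
Implicit Types (u v w : 'rV[R]_m) (a : R).

Lemma dotvC u v : dotv u v = dotv v u.
Proof. by apply: eq_bigr => i _; rewrite mulrC. Qed.

Lemma dotvDl u v w : dotv (u + v) w = dotv u w + dotv v w.
Proof. by rewrite /dotv -big_split; apply: eq_bigr => i _; rewrite !mxE mulrDl. Qed.

Lemma dotvZl a u w : dotv (a *: u) w = a * dotv u w.
Proof. by rewrite /dotv mulr_sumr; apply: eq_bigr => i _; rewrite !mxE mulrA. Qed.

Lemma dotvNl u w : dotv (- u) w = - dotv u w.
Proof. by rewrite -scaleN1r dotvZl mulN1r. Qed.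

Lemma dotvBl u v w : dotv (u - v) w = dotv u w - dotv v w.
Proof. by rewrite dotvDl dotvNl. Qed.

Lemma dotvDr u v w : dotv w (u + v) = dotv w u + dotv w v.
Proof. by rewrite dotvC dotvDl !(dotvC w). Qed.

Lemma dotvZr a u w : dotv w (a *: u) = a * dotv w u.
Proof. by rewrite dotvC dotvZl dotvC. Qed.

Lemma dotvNr u w : dotv w (- u) = - dotv w u.
Proof. by rewrite -scaleN1r dotvZr mulN1r. Qed.

Lemma dotv0r u : dotv u 0 = 0.
Proof. by rewrite -(scale0r 0) dotvZr mul0r. Qed.

Lemma sqnZ a u : sqn (a *: u) = a ^+ 2 * sqn u.
Proof. by rewrite /sqn dotvZl dotvZr mulrA. Qed.

Lemma sqnN u : sqn (- u) = sqn u.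
Proof. by rewrite -scaleN1r sqnZ sqrrN expr1n mul1r. Qed.

Lemma sqnD u v : sqn (u + v) = sqn u + 2 * dotv u v + sqn v.
Proof. by rewrite /sqn dotvDl !dotvDr (dotvC v u); ring. Qed.

Lemma sqn_ge0 u : 0 <= sqn u.
Proof. by apply: sumr_ge0 => i _; rewrite -expr2 sqr_ge0. Qed.

Lemma sqn_eq0 u : (sqn u == 0) = (u == 0).
Proof.
apply/idP/eqP => [|->]; last by rewrite /sqn dotv0r.
rewrite psumr_eq0 => [/allP u0|i _]; last by rewrite -expr2 sqr_ge0.
apply/matrixP => i j; rewrite [i]ord1 mxE.
by have /implyP := u0 j (mem_index_enum _); rewrite mulf_eq0 orbb => /(_ isT)/eqP.
Qed.

Lemma enorm_ge0 u : 0 <= enorm u.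
Proof. exact: sqrtr_ge0. Qed.

Lemma sqr_enorm u : enorm u ^+ 2 = sqn u.
Proof. by rewrite sqr_sqrtr // sqn_ge0. Qed.

Lemma enormZ a u : enorm (a *: u) = `|a| * enorm u.
Proof. by rewrite /enorm sqnZ sqrtrM ?sqr_ge0 // sqrtr_sqr. Qed.

Lemma enorm_eq0 u : (enorm u == 0) = (u == 0).
Proof. by rewrite sqrtr_eq0 le_eqVlt ltNge sqn_ge0 orbF sqn_eq0. Qed.

Lemma dotv_le_enorm u v : `|dotv u v| <= enorm u * enorm v.
Proof.
have [->|u0] := eqVneq u 0; first by rewrite dotvC dotv0r normr0 mulr_ge0 ?enorm_ge0.
have [->|v0] := eqVneq v 0; first by rewrite dotv0r normr0 mulr_ge0 ?enorm_ge0.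
have pq_gt0 : 0 < 2 * (enorm u * enorm v).
  by rewrite !mulr_gt0 // lt_def enorm_eq0 ?u0 ?v0 enorm_ge0.
have sqn_combination (e : R) : sqn (enorm v *: u + (e * enorm u) *: v)
    = 2 * (enorm u * enorm v) * (enorm u * enorm v + e * dotv u v)
      - (1 - e ^+ 2) * (sqn u * sqn v).
  by rewrite sqnD !sqnZ !dotvZl !dotvZr -(sqr_enorm u) -(sqr_enorm v); ring.
have := sqn_ge0 (enorm v *: u + (1 * enorm u) *: v).
have := sqn_ge0 (enorm v *: u + (-1 * enorm u) *: v).
rewrite !sqn_combination sqrrN expr1n subrr mul0r !subr0 !(pmulr_rge0 _ pq_gt0).
rewrite mulN1r mul1r subr_ge0 => d_le ge0_d.
by rewrite ler_norml d_le andbT lerNl -subr_ge0 opprK.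
Qed.

End InnerProduct.

Lemma pnorm0l (R : realType) (n m : nat) (v : 'rV[R]_m) : pnorm (0 : 'rV[R]_n) v = enorm v.
Proof. by rewrite /pnorm /sqn dotv0r add0r. Qed.

Lemma enorm_le_pnorm (R : realType) (n m : nat) (u : 'rV[R]_n) (v : 'rV[R]_m) :
  enorm v <= pnorm u v.
Proof. by rewrite ler_sqrt ?addr_ge0 ?sqn_ge0 // lerDr sqn_ge0. Qed.

Lemma enorm_le_of_pnorm_le (R : realType) (n m : nat) (L : R) (a : 'rV[R]_n)
    (b c : 'rV[R]_m) :
  pnorm a b <= L * pnorm (0 : 'rV[R]_n) c -> enorm b <= L * enorm c.
Proof. by rewrite pnorm0l; apply: le_trans (enorm_le_pnorm a b). Qed.

Lemma le0_of_le_small_mul (R : realFieldType) (x c : R) :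
  (forall a, 0 < a <= 1 -> x <= a * c) -> x <= 0.
Proof.
move=> small; have := small 1; rewrite ltr01 lexx mul1r => /(_ isT) xc.
rewrite leNgt; apply/negP => x_gt0.
have c_gt0 : 0 < c by apply: lt_le_trans xc.
have a_small : 0 < x / (2 * c) <= 1.
  by rewrite divr_gt0 ?mulr_gt0 // ler_pdivrMr ?mulr_gt0 // mul1r; lra.
have := small _ a_small.
have -> : x / (2 * c) * c = x / 2 by field; rewrite gt_eqF.
lra.
Qed.

Lemma taylor1_le (R : realType) (g g' : R -> R) (M : R) :
  (forall t : R, 0 <= t <= 1 -> is_derive t 1 g (g' t)) ->
  (forall t : R, 0 <= t <= 1 -> g' t - g' 0 <= M * t) ->
  g 1 - g 0 - g' 0 <= M / 2.
Proof.
move=> dg g'_lip.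
pose psi := g - g' 0 \*: id - (M / 2) \*: (id \* id).
have dpsi (t : R) : 0 <= t <= 1 -> is_derive t 1 psi (g' t - g' 0 - M * t).
  move=> /dg dg_t; apply: is_derive_eq.
  by rewrite /GRing.scale /=; field.
have psi_cont : {within `[0, 1], continuous psi}.
  by apply: derivable_within_continuous => t t01; have [] := dpsi t t01.
have [c c01 psi1] := MVT_segment ler01 (fun t t01 => dpsi t (subset_itv_oo_cc t01)) psi_cont.
have psiE (t : R) : psi t = g t - g' 0 * t - M / 2 * (t * t) by [].
have := g'_lip c c01; rewrite !psiE !mulr1 !mul0r !mulr0 !subr0 in psi1.
lra.
Qed.

Lemma convex_combE (R : pzRingType) (m : nat) (a : R) (u v : 'rV[R]_m) :
  a *: u + (1 - a) *: v = a *: (u - v) + v.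
Proof. by rewrite scalerBr scalerBl scale1r addrA [_ - a *: v + v]addrAC. Qed.

Section SmoothFunction.
Variables (R : realType) (m : nat) (L : R) (S : set 'rV[R]_m).
Variables (phi : 'rV[R]_m -> R) (grad : 'rV[R]_m -> 'rV[R]_m).
Hypothesis S_convex : forall u v (a : R), S u -> S v -> 0 <= a <= 1 ->
  S (a *: u + (1 - a) *: v).
Hypothesis phi_grad : forall y D (t : R), S (t *: D + y) ->
  is_derive t 1 (fun t => phi (t *: D + y)) (dotv (grad (t *: D + y)) D).
Hypothesis grad_lipschitz : forall u w, S u -> S w ->
  enorm (grad u - grad w) <= L * enorm (u - w).

Lemma segment_mem y1 y2 (t : R) : S y1 -> S y2 -> 0 <= t <= 1 ->
  S (t *: (y2 - y1) + y1).
Proof. by move=> S1 S2 t01; rewrite -convex_combE; apply: S_convex. Qed.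

Lemma grad_segment_le y1 y2 (t : R) : S y1 -> S y2 -> 0 <= t <= 1 ->
  `|dotv (grad (t *: (y2 - y1) + y1) - grad y1) (y2 - y1)| <= L * t * sqn (y2 - y1).
Proof.
move=> S1 S2 t01; apply: le_trans (dotv_le_enorm _ _) _.
rewrite -sqr_enorm expr2 mulrA ler_wpM2r ?enorm_ge0 //.
apply: le_trans (grad_lipschitz (segment_mem S1 S2 t01) S1) _.
by case/andP: t01 => t_ge0 _; rewrite addrK enormZ ger0_norm // mulrA.
Qed.

Lemma linearization_error_le y1 y2 : S y1 -> S y2 ->
  `|phi y2 - phi y1 - dotv (grad y1) (y2 - y1)| <= L / 2 * sqn (y2 - y1).
Proof.
move=> S1 S2; set D := y2 - y1.
pose q (t : R) := phi (t *: D + y1).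
pose q' (t : R) := dotv (grad (t *: D + y1)) D.
have q_deriv (t : R) : 0 <= t <= 1 -> is_derive t 1 q (q' t).
  by move=> t01; apply: phi_grad; apply: segment_mem.
have q'_lip (t : R) : 0 <= t <= 1 -> `|q' t - q' 0| <= L * sqn D * t.
  by move=> t01; rewrite /q' scale0r add0r -dotvBl mulrAC; apply: grad_segment_le.
have [q1 q0 q'0] : [/\ q 1 = phi y2, q 0 = phi y1 & q' 0 = dotv (grad y1) D].
  by rewrite /q /q' scale1r scale0r add0r subrK.
have upper : q 1 - q 0 - q' 0 <= L * sqn D / 2.
  apply: taylor1_le => // t t01.
  by apply: le_trans (ler_norm _) _; rewrite q'_lip.
have lower : - q 1 + q 0 + q' 0 <= L * sqn D / 2.
  rewrite -[q 0]opprK -[q' 0]opprK.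
  apply: (@taylor1_le _ (fun t => - q t) (fun t => - q' t)) => t t01.
    exact: is_deriveN (q_deriv t t01).
  rewrite opprK addrC -opprB; apply: le_trans (ler_norm _) _.
  by rewrite normrN q'_lip.
rewrite mulrAC -q1 -q0 -q'0 ler_norml upper andbT.
by rewrite lerNl; lra.
Qed.

Lemma linearization_le y1 y2 : S y1 -> S y2 ->
  phi y1 + dotv (grad y1) (y2 - y1) - L / 2 * sqn (y2 - y1) <= phi y2.
Proof. by move=> S1 S2; have /ler_normlP[+ _] := linearization_error_le S1 S2; lra. Qed.

Lemma strongly_concave_le (mu : R) y1 y2 : strongly_concave mu phi -> S y1 -> S y2 ->
  phi y2 <= phi y1 + dotv (grad y1) (y2 - y1) - mu / 2 * sqn (y2 - y1).
Proof.
move=> concave S1 S2; set D := y2 - y1.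
(* Divide the strong concavity inequality at [a *: D + y1] by [a] and let [a]
   tend to 0; the smoothness bound at that point controls the error. *)
suff : phi y2 - phi y1 - dotv (grad y1) D + mu / 2 * sqn D <= 0 by lra.
apply: (@le0_of_le_small_mul _ _ ((mu + L) / 2 * sqn D)) => a /andP[a_gt0 a_le1].
have a01 : 0 <= a <= 1 by rewrite ltW.
have Sa := segment_mem S1 S2 a01.
have := concave y2 y1 a a01; rewrite convex_combE -/D => concave_a.
have := linearization_error_le S1 Sa; rewrite addrK dotvZr sqnZ.
case/ler_normlP => _ smooth_a.
rewrite -(ler_pM2l a_gt0) -subr_le0.
set E1 := a * phi y2 + (1 - a) * phi y1 + mu / 2 * a * (1 - a) * sqn D - phi (a *: D + y1).
set E2 := phi (a *: D + y1) - phi y1 - a * dotv (grad y1) D - L / 2 * (a ^+ 2 * sqn D).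
have -> : a * (phi y2 - phi y1 - dotv (grad y1) D + mu / 2 * sqn D)
    - a * (a * ((mu + L) / 2 * sqn D)) = E1 + E2 by rewrite /E1 /E2; ring.
by rewrite -[0]addr0 lerD // subr_le0.
Qed.

End SmoothFunction.

Lemma proper_fun_real (R : realType) (T : Type) (phi : T -> \bar R) y :
  proper_fun phi -> edom phi y -> exists r : R, phi y = r%:E.
Proof.
case=> phi_neqNy _ y_dom; exists (fine (phi y)).
by rewrite fineK // fin_numE phi_neqNy lt_eqF.
Qed.

Lemma edom_le_sub (R : realType) (T : Type) (psi : T -> R) (phi : T -> \bar R) x y :
  edom phi y -> ((psi y)%:E - phi y <= (psi x)%:E - phi x)%E -> edom phi x.
Proof.
rewrite /edom /=; case: (phi x) => // [rx _ _|]; first exact: ltry.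
by case: (phi y).
Qed.

Lemma is_prox_edom (R : realType) (m : nat) (phi : 'rV[R]_m -> \bar R) (c : R) u v w :
  0 < c -> is_prox (fun y => (c%:E * phi y)%E) u v -> edom phi w -> edom phi v.
Proof.
rewrite /edom /= => c_gt0 prox w_dom; have := prox w.
case: (phi v) => // [r _|]; first exact: ltry.
rewrite gt0_muley ?lte_fin // addye // => /le_lt_trans; apply.
by apply: lte_add_pinfty (ltry _); apply: lte_mul_pinfty; rewrite ?lee_fin ?ltW.
Qed.

Section ConvexExtendedFunction.
Variables (R : realType) (m : nat) (phi : 'rV[R]_m -> \bar R).
Hypothesis phi_convex : convex_fun phi.

Lemma edom_convex u v (a : R) : edom phi u -> edom phi v -> 0 <= a <= 1 ->
  edom phi (a *: u + (1 - a) *: v).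
Proof.
move=> u_dom v_dom /[dup] a01 /andP[a_ge0 a_le1].
apply: le_lt_trans (phi_convex u v a01) _.
by apply: lte_add_pinfty; apply: lte_mul_pinfty; rewrite ?lee_fin ?subr_ge0.
Qed.

Lemma is_prox_scale_le (c : R) u v w (a b : R) : 0 < c ->
  is_prox (fun y => (c%:E * phi y)%E) u v -> phi v = a%:E -> phi w = b%:E ->
  c * (a - b) <= dotv (v - u) (w - v).
Proof.
move=> c_gt0 prox phi_v phi_w; rewrite -subr_le0.
apply: (@le0_of_le_small_mul _ _ (sqn (w - v) / 2)) => t /andP[t_gt0 t_le1].
have t01 : 0 <= t <= 1 by rewrite ltW.
have phi_wt : (c%:E * phi (t *: (w - v) + v) <= (c * (t * b + (1 - t) * a))%:E)%E.
  rewrite EFinM; apply: lee_wpmul2l; first by rewrite lee_fin ltW.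
  by have := phi_convex w v t01; rewrite convex_combE phi_v phi_w -!EFinM -EFinD.
have := le_trans (prox (t *: (w - v) + v)) (leeD2r _ phi_wt).
have -> : t *: (w - v) + v - u = (v - u) + t *: (w - v) by rewrite -addrA addrC.
rewrite phi_v -EFinM -!EFinD lee_fin [sqn (_ + t *: _)]sqnD sqnZ dotvZr => min_wt.
rewrite -(ler_pM2l t_gt0) -subr_le0.
have -> : t * (c * (a - b) - dotv (v - u) (w - v)) - t * (t * (sqn (w - v) / 2))
    = (c * a + sqn (v - u) / 2) - (c * (t * b + (1 - t) * a)
       + (sqn (v - u) + 2 * (t * dotv (v - u) (w - v)) + t ^+ 2 * sqn (w - v)) / 2).
  by field.
by rewrite subr_le0.
Qed.

End ConvexExtendedFunction.

Lemma line_is_derive (R : realType) (V : normedModType R) (F : V -> R) (z v : V) (t : R) :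
  differentiable F (t *: v + z) ->
  is_derive t 1 (fun s : R => F (s *: v + z)) ('d F (t *: v + z) v).
Proof.
move=> dF.
have quotE : (fun h : R => h^-1 *: (F ((h *: 1 + t) *: v + z) - F (t *: v + z)))
    = (fun h => h^-1 *: (F (h *: v + (t *: v + z)) - F (t *: v + z))).
  by apply/funext => h; rewrite [h *: 1]mulr1 scalerDl addrA.
apply: DeriveDef; first by rewrite /derivable quotE; exact: diff_derivable.
by rewrite /derive quotE; exact: deriveE.
Qed.

Lemma partial_is_derive (R : realType) (n m : nat) (F : 'rV[R]_n * 'rV[R]_m -> R)
    (gx : 'rV[R]_n) (gy : 'rV[R]_m) (x : 'rV[R]_n) (y D : 'rV[R]_m) (t : R) :
  differentiable F (x, t *: D + y) ->
  (forall dz, 'd F (x, t *: D + y) dz = dotv gx dz.1 + dotv gy dz.2) ->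
  is_derive t 1 (fun s : R => F (x, s *: D + y)) (dotv gy D).
Proof.
move=> dF dFE; have := dFE (0, D); rewrite /= dotv0r add0r => dF_D.
have lineE (s : R) : s *: ((0 : 'rV[R]_n), D) + (x, y) = (x, s *: D + y).
  by apply: injective_projections; rewrite /= ?scaler0 ?add0r.
have -> : (fun s : R => F (x, s *: D + y)) = (fun s => F (s *: (0, D) + (x, y))).
  by apply/funext => s; rewrite lineE.
rewrite -lineE in dF dF_D.
by apply: is_derive_eq (line_is_derive dF) _.
Qed.

Lemma prox_step_le (R : realType) (m : nat) (eta L mu fb fs fp hs hp : R)
    (g s G ybar ystar yplus : 'rV[R]_m) :
  0 < eta -> yplus = ybar + eta *: G ->
  fb + dotv g (yplus - ybar) - L / 2 * sqn (yplus - ybar) <= fp ->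
  fs <= fb + dotv g (ystar - ybar) - mu / 2 * sqn (ystar - ybar) ->
  fp - hp <= fs - hs ->
  eta * (hp - hs) <= dotv (yplus - (ybar + eta *: s)) (ystar - yplus) ->
  2 * eta * dotv G (ybar - ystar) + eta ^+ 2 * sqn G
    <= - (eta * mu * sqn (ybar - ystar)) - eta ^+ 2 * (1 - L * eta) * sqn G
       + 2 * eta * dotv (s - g) (yplus - ystar).
Proof.
move=> eta_gt0 -> smooth concave optimal prox.
set a := ybar - ystar.
have step : ybar + eta *: G - ybar = eta *: G by rewrite addrC addKr.
have star : ystar - ybar = - a by rewrite opprB.
have plus_star : ybar + eta *: G - ystar = eta *: G + a by rewrite addrAC addrC.
have star_plus : ystar - (ybar + eta *: G) = - (eta *: G + a).
  by rewrite -plus_star opprB.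
have prox_step : ybar + eta *: G - (ybar + eta *: s) = eta *: (G - s).
  by rewrite opprD addrACA subrr add0r scalerBr.
rewrite step in smooth; rewrite star in concave; rewrite prox_step star_plus in prox.
rewrite plus_star; clearbody a.
rewrite !(dotvZl, dotvZr, dotvDr, dotvBl, dotvNr, sqnZ, sqnN) -/(sqn G)
  in smooth concave prox *.
rewrite -subr_ge0 in smooth; rewrite -subr_ge0 in concave.
rewrite -subr_ge0 in optimal; rewrite -subr_ge0 in prox.
have := addr_ge0 (mulr_ge0 (ltW eta_gt0) (addr_ge0 (addr_ge0 smooth concave) optimal)) prox.
set Z := (X in 0 <= X) => Z_ge0.
rewrite -subr_ge0 (_ : _ - _ = 2 * Z) ?mulr_ge0 //.
by rewrite /Z; field.
Qed.

Theorem corollary1 (R : realType)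
  (* spaces: X = prod_i R^{n_i}, stored as R^(sum_i n_i); Y = R^m *)
  (N : nat) (n : 'I_N -> nat) (m : nat)
  (gi : forall i : 'I_N, 'rV[R]_(n i) -> \bar R)
  (h : 'rV[R]_m -> \bar R)
  (f : 'rV[R]_(\sum_(i < N) n i) -> 'rV[R]_m -> R)
  (gx : 'rV[R]_(\sum_(i < N) n i) -> 'rV[R]_m -> 'rV[R]_(\sum_(i < N) n i))
  (gy : 'rV[R]_(\sum_(i < N) n i) -> 'rV[R]_m -> 'rV[R]_m)
  (U : set ('rV[R]_(\sum_(i < N) n i) * 'rV[R]_m))
  (L mu : R)
  (* Assumption A *)
  (Hmu : 0 < mu)
  (Hgi : forall i, closed_proper_convex (gi i))
  (Hh : closed_proper_convex h)
  (HUopen : open U)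
  (HU : edom (sepsum gi) `*` edom h `<=` U)
  (Hdiff : forall z, U z ->
     differentiable (fun w : 'rV[R]_(\sum_(i < N) n i) * 'rV[R]_m => f w.1 w.2) z /\
     forall dz : 'rV[R]_(\sum_(i < N) n i) * 'rV[R]_m,
       'd (fun w : 'rV[R]_(\sum_(i < N) n i) * 'rV[R]_m => f w.1 w.2) z dz
         = dotv (gx z.1 z.2) dz.1 + dotv (gy z.1 z.2) dz.2)
  (HLip : forall z z', U z -> U z' ->
     pnorm (gx z.1 z.2 - gx z'.1 z'.2) (gy z.1 z.2 - gy z'.1 z'.2)
       <= L * pnorm (z.1 - z'.1) (z.2 - z'.2))
  (Hconc : forall x, edom (sepsum gi) x -> strongly_concave mu (f x))
  (* Assumption B: stochastic oracle for grad_y f with variance <= sigy^2 *)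
  (d : measure_display) (Z : measurableType d) (P : probability Z R)
  (orc : 'rV[R]_(\sum_(i < N) n i) -> 'rV[R]_m -> Z -> 'rV[R]_m)
  (sigy : R)
  (Hunb : forall x y, edom (sepsum gi) x -> edom h y -> forall j : 'I_m,
     P.-integrable setT (fun z => (orc x y z 0 j)%:E) /\
     (\int[P]_z (orc x y z 0 j)%:E = (gy x y 0 j)%:E)%E)
  (Hvar : forall x y, edom (sepsum gi) x -> edom h y ->
     (\int[P]_z (sqn (orc x y z - gy x y))%:E <= (sigy ^+ 2)%:E)%E)
  (* samples, points, step size *)
  (My : nat) (HMy : (0 < My)%N) (zeta : 'I_My -> Z)
  (xbar : 'rV[R]_(\sum_(i < N) n i)) (ybar : 'rV[R]_m)
  (Hxbar : edom (sepsum gi) xbar) (Hybar : edom h ybar)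
  (etay : R) (Heta : 0 < etay)
  (* y_*(xbar) = argmax_y f(xbar, y) - h(y) *)
  (ystar : 'rV[R]_m)
  (Hystar : forall y, ((f xbar y)%:E - h y <= (f xbar ystar)%:E - h ystar)%E)
  (* ybar^+ = prox_{etay h}(ybar + etay s_y) *)
  (yplus : 'rV[R]_m) :
  let s := (My%:R)^-1 *: \sum_(j < My) orc xbar ybar (zeta j) in
  is_prox (fun y => (etay%:E * h y)%E) (ybar + etay *: s) yplus ->
  let G := etay^-1 *: (yplus - ybar) in
  2 * etay * dotv G (ybar - ystar) + etay ^+ 2 * sqn G
    <= - (etay * mu * sqn (ybar - ystar))
       - etay ^+ 2 * (1 - L * etay) * sqn G
       + 2 * etay * dotv (s - gy xbar ybar) (yplus - ystar).
Proof.
move=> s prox; cbv zeta; set G := etay^-1 *: (yplus - ybar).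
have [_ h_proper h_convex] := Hh.
have dom_convex := edom_convex h_convex.
have f_grad y D (t : R) : edom h (t *: D + y) ->
    is_derive t 1 (fun t => f xbar (t *: D + y)) (dotv (gy xbar (t *: D + y)) D).
  move=> Sy; have [] := Hdiff _ (HU (xbar, _) (conj Hxbar Sy)).
  exact: partial_is_derive.
have gy_lip u w : edom h u -> edom h w ->
    enorm (gy xbar u - gy xbar w) <= L * enorm (u - w).
  move=> Su Sw; apply: (@enorm_le_of_pnorm_le _ _ _ _ (gx xbar u - gx xbar w)).
  have := HLip _ _ (HU (xbar, u) (conj Hxbar Su)) (HU (xbar, w) (conj Hxbar Sw)).
  by rewrite /= subrr.
have ystar_dom : edom h ystar := edom_le_sub Hybar (Hystar ybar).
have yplus_dom : edom h yplus := is_prox_edom Heta prox Hybar.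
have [hs hs_eq] := proper_fun_real h_proper ystar_dom.
have [hp hp_eq] := proper_fun_real h_proper yplus_dom.
apply: (@prox_step_le _ _ _ _ _ (f xbar ybar) (f xbar ystar) (f xbar yplus) hs hp) => //.
- by rewrite /G scalerA mulfV ?gt_eqF // scale1r addrC subrK.
- exact: (linearization_le dom_convex f_grad gy_lip Hybar yplus_dom).
- exact: (strongly_concave_le dom_convex f_grad gy_lip (Hconc xbar Hxbar) Hybar ystar_dom).
- by have := Hystar yplus; rewrite hp_eq hs_eq -!EFinB lee_fin.
- exact: (is_prox_scale_le h_convex Heta prox hp_eq hs_eq).
Qed.
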